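(* Let $T:X\rightrightarrows X^*$ be a monotone operator. Then $T$ is maximal pseudomonotone if and only if $T=X\times\{0\}$.
   Context: $X$ is a real Banach space with dual $X^*$ and pairing $\langle x,x^*\rangle=x^*(x)$. A multivalued operator $T:X\rightrightarrows X^*$ is identified with its graph $T\subset X\times X^*$. $T$ is monotone if $\langle x-y,x^*-y^*\rangle\ge0$ for all $(x,x^* ),(y,y^* )\in T$. $T$ is pseudomonotone if for all $(x,x^* ),(y,y^* )\in T$, $\langle y-x,x^*\rangle\ge0$ implies $\langle y-x,y^*\rangle\ge0$. $T$ is maximal pseudomonotone if it is pseudomonotone and for every pseudomonotone $S$ with $T\subset S$ one has $S=T$. *)

From Stdlib Require Import Reals.
Open Scope R_scope.
Set Implicit Arguments.

Record BanachSpace := {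
  carrier :> Type;
  vzero : carrier;
  vadd : carrier -> carrier -> carrier;
  vopp : carrier -> carrier;
  vscal : R -> carrier -> carrier;
  vnorm : carrier -> R;
  vadd_assoc : forall x y z, vadd x (vadd y z) = vadd (vadd x y) z;
  vadd_comm : forall x y, vadd x y = vadd y x;
  vadd_0l : forall x, vadd vzero x = x;
  vadd_oppr : forall x, vadd x (vopp x) = vzero;
  vscal_1 : forall x, vscal 1 x = x;
  vscal_assoc : forall a b x, vscal a (vscal b x) = vscal (a * b) x;
  vscal_addl : forall a b x, vscal (a + b) x = vadd (vscal a x) (vscal b x);
  vscal_addr : forall a x y, vscal a (vadd x y) = vadd (vscal a x) (vscal a y);
  vnorm_ge0 : forall x, 0 <= vnorm x;
  vnorm_eq0 : forall x, vnorm x = 0 -> x = vzero;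
  vnorm_scal : forall a x, vnorm (vscal a x) = Rabs a * vnorm x;
  vnorm_triangle : forall x y, vnorm (vadd x y) <= vnorm x + vnorm y;
  vcomplete : forall u : nat -> carrier,
    (forall eps, 0 < eps -> exists N, forall m n, (N <= m)%nat -> (N <= n)%nat ->
        vnorm (vadd (u m) (vopp (u n))) < eps) ->
    exists l, forall eps, 0 < eps -> exists N, forall n, (N <= n)%nat ->
        vnorm (vadd (u n) (vopp l)) < eps
}.

Definition vsub {X : BanachSpace} (x y : X) : X := vadd X x (vopp X y).

Record dual (X : BanachSpace) := {
  dfun :> X -> R;
  dfun_add : forall x y, dfun (vadd X x y) = dfun x + dfun y;
  dfun_scal : forall a x, dfun (vscal X a x) = a * dfun x;
  dfun_bounded : exists M, forall x, Rabs (dfun x) <= M * vnorm X x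
}.

Definition pairing {X : BanachSpace} (x : X) (xs : dual X) : R := dfun xs x.

Lemma dual0_add (X : BanachSpace) : forall x y : X,
  (fun _ : X => 0) (vadd X x y) = (fun _ : X => 0) x + (fun _ : X => 0) y.
Proof. intros; simpl; ring. Qed.
Lemma dual0_scal (X : BanachSpace) : forall (a : R) (x : X),
  (fun _ : X => 0) (vscal X a x) = a * (fun _ : X => 0) x.
Proof. intros; simpl; ring. Qed.
Lemma dual0_bounded (X : BanachSpace) :
  exists M, forall x : X, Rabs ((fun _ : X => 0) x) <= M * vnorm X x.
Proof. exists 0; intros; rewrite Rabs_R0; right; ring. Qed.

Definition dual0 (X : BanachSpace) : dual X :=
  {| dfun := fun _ => 0; dfun_add := dual0_add X;
     dfun_scal := dual0_scal X; dfun_bounded := dual0_bounded X |}.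

(** A multivalued operator T : X ⇉ X^*, identified with its graph. *)
Definition operator (X : BanachSpace) := X -> dual X -> Prop.

Definition monotone (X : BanachSpace) (T : operator X) : Prop :=
  forall x xs y ys, T x xs -> T y ys ->
    0 <= pairing (vsub x y) xs - pairing (vsub x y) ys.

Definition pseudomonotone (X : BanachSpace) (T : operator X) : Prop :=
  forall x xs y ys, T x xs -> T y ys ->
    0 <= pairing (vsub y x) xs -> 0 <= pairing (vsub y x) ys.

Definition maximal_pseudomonotone (X : BanachSpace) (T : operator X) : Prop :=
  pseudomonotone T /\
  forall S : operator X, pseudomonotone S ->
    (forall x xs, T x xs -> S x xs) -> (forall x xs, S x xs <-> T x xs).

(** Pseudomonotonicity is insensitive to rescaling each value by its own positive factor,
    so a maximal pseudomonotone [T] is closed under positive multiples of its values.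
    Combined with monotonicity, letting the factor grow forces [f y <= f x] whenever
    [(x, f)] and [(y, g)] lie in [T].  Then every [(x + w, f)] with [f w > 0] can be
    added to [T] without losing pseudomonotonicity, hence lies in [T], contradicting that
    inequality; so [f] is bounded above, i.e. zero.  Finally [X × {0}] is
    pseudomonotone and contains [T], so it equals [T] by maximality; conversely it is
    maximal because a functional bounded above vanishes. *)
From Stdlib Require Import Reals Lra Classical.
From Stdlib Require Import FunctionalExtensionality PropExtensionality ProofIrrelevance.
Open Scope R_scope.

Section DualSpace.
Context {X : BanachSpace}.

Lemma dual_ext (xs ys : dual X) : (forall x, xs x = ys x) -> xs = ys.
Proof.
  destruct xs as [f fa fs fb], ys as [g ga gs gb]; simpl; intros Efg.
  assert (f = g) by (apply functional_extensionality; exact Efg). subst g.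
  f_equal; apply proof_irrelevance.
Qed.

Lemma dual_vzero (xs : dual X) : xs (vzero X) = 0.
Proof.
  pose proof (dfun_add xs (vzero X) (vzero X)) as E.
  rewrite vadd_0l in E. lra.
Qed.

Lemma dual_vopp (xs : dual X) (y : X) : xs (vopp X y) = - xs y.
Proof.
  pose proof (dfun_add xs y (vopp X y)) as E.
  rewrite vadd_oppr, dual_vzero in E. lra.
Qed.

Lemma pairing_vsub (a b : X) (xs : dual X) : pairing (vsub a b) xs = xs a - xs b.
Proof. unfold pairing, vsub. rewrite dfun_add, dual_vopp. ring. Qed.

Lemma dual_bounded_above_eq0 (xs : dual X) (c : R) :
  (forall y, xs y <= c) -> xs = dual0 X.
Proof.
  intros Hc. apply dual_ext; intros u; simpl.
  apply NNPP; intros Hu.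
  set (t := (Rabs c + 1) / xs u).
  assert (E : xs (vscal X t u) = Rabs c + 1)
    by (rewrite dfun_scal; unfold t; field; exact Hu).
  pose proof (Hc (vscal X t u)). pose proof (Rle_abs c). lra.
Qed.

Section Scale.
Variables (l : R) (xs : dual X).

Lemma dual_scale_add (x y : X) :
  (fun z => l * xs z) (vadd X x y) = (fun z => l * xs z) x + (fun z => l * xs z) y.
Proof. simpl; rewrite dfun_add; ring. Qed.

Lemma dual_scale_scal (a : R) (x : X) :
  (fun z => l * xs z) (vscal X a x) = a * (fun z => l * xs z) x.
Proof. simpl; rewrite dfun_scal; ring. Qed.

Lemma dual_scale_bounded :
  exists M, forall x, Rabs ((fun z => l * xs z) x) <= M * vnorm X x.
Proof.
  destruct (dfun_bounded xs) as [M HM]. exists (Rabs l * M). intros x; simpl.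
  rewrite Rabs_mult, Rmult_assoc.
  apply Rmult_le_compat_l; [apply Rabs_pos | apply HM].
Qed.

Definition dual_scale : dual X :=
  {| dfun := fun z => l * xs z; dfun_add := dual_scale_add;
     dfun_scal := dual_scale_scal; dfun_bounded := dual_scale_bounded |}.

End Scale.

Definition zero_operator : operator X := fun _ xs => xs = dual0 X.

Definition cone_hull (T : operator X) : operator X :=
  fun x ys => exists l xs, 0 < l /\ T x xs /\ forall y, ys y = l * xs y.

Lemma pseudomonotone_zero_operator : pseudomonotone zero_operator.
Proof.
  intros x xs y ys _ -> _. rewrite pairing_vsub; simpl; lra.
Qed.

Lemma pseudomonotone_cone_hull {T : operator X} :
  pseudomonotone T -> pseudomonotone (cone_hull T).
Proof.
  intros Hps a as_ b bs [la [a1 [Hla [Ta Ea]]]] [lb [b1 [Hlb [Tb Eb]]]].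
  rewrite !pairing_vsub, Ea, Ea, Eb, Eb. intros Hab.
  assert (Ha1 : 0 <= pairing (vsub b a) a1).
  { rewrite pairing_vsub. apply Rmult_le_reg_l with la; lra. }
  pose proof (Hps _ _ _ _ Ta Tb Ha1) as Hb1. rewrite pairing_vsub in Hb1. nra.
Qed.

Section Maximal.
Context {T : operator X} (HT : maximal_pseudomonotone T).

Lemma maximal_pseudomonotone_sub {S : operator X} :
  pseudomonotone S -> (forall x xs, T x xs -> S x xs) ->
  forall x xs, S x xs -> T x xs.
Proof. intros HS HTS x xs. apply (proj2 HT S HS HTS). Qed.

Lemma maximal_pseudomonotone_scale (x : X) (xs : dual X) (l : R) :
  0 < l -> T x xs -> T x (dual_scale l xs).
Proof.
  intros Hl Tx.
  apply (maximal_pseudomonotone_sub (pseudomonotone_cone_hull (proj1 HT))).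
  - intros a as_ Ta. exists 1, as_. split; [lra | split; [exact Ta | intros; ring]].
  - exists l, xs. repeat split; auto.
Qed.

(* Adjoining [(x0 + w, xs0)] with [xs0 w > 0] keeps [T] pseudomonotone. *)
Lemma maximal_pseudomonotone_values_eq0 :
  (forall x xs y ys, T x xs -> T y ys -> xs y <= xs x) ->
  forall x xs, T x xs -> xs = dual0 X.
Proof.
  intros Hle x0 xs0 Tx0. apply (dual_bounded_above_eq0 xs0 0); intros w.
  apply Rnot_lt_le; intros Hw.
  set (z := vadd X x0 w).
  assert (Ez : xs0 z = xs0 x0 + xs0 w) by apply dfun_add.
  set (S := fun x xs => T x xs \/ (x = z /\ xs = xs0)).
  assert (HS : pseudomonotone S).
  { intros a as_ b bs [Ta | [-> ->]] [Tb | [-> ->]]; rewrite !pairing_vsub.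
    - rewrite <- !pairing_vsub. apply (proj1 HT); assumption.
    - pose proof (Hle _ _ _ _ Tx0 Ta). lra.
    - pose proof (Hle _ _ _ _ Tx0 Tb). lra.
    - lra. }
  assert (Tz : T z xs0).
  { apply (maximal_pseudomonotone_sub HS); [intros; left; assumption | right; auto]. }
  pose proof (Hle _ _ _ _ Tx0 Tz). lra.
Qed.

End Maximal.

(* Monotonicity tested against [(x, l xs)] for large [l] leaves only the sign of
   [xs x - xs y]. *)
Lemma monotone_cone_values_le {T : operator X} :
  monotone T ->
  (forall x xs l, 0 < l -> T x xs -> T x (dual_scale l xs)) ->
  forall x xs y ys, T x xs -> T y ys -> xs y <= xs x.
Proof.
  intros Hmon Hcone x xs y ys Tx Ty.
  apply Rnot_lt_le; intros Hlt.
  set (b := ys x - ys y).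
  set (l := (Rabs b + 1) / (xs y - xs x)).
  assert (Hl : 0 < l).
  { unfold l. apply Rdiv_lt_0_compat; [pose proof (Rabs_pos b) |]; lra. }
  pose proof (Hmon _ _ _ _ (Hcone x xs l Hl Tx) Ty) as M.
  rewrite !pairing_vsub in M; simpl in M.
  assert (E : l * xs x - l * xs y = - (Rabs b + 1)) by (unfold l; field; lra).
  pose proof (Rle_abs (- b)). rewrite Rabs_Ropp in *. unfold b in *. lra.
Qed.

Lemma maximal_pseudomonotone_zero_operator : maximal_pseudomonotone zero_operator.
Proof.
  split; [exact pseudomonotone_zero_operator |].
  intros S HS Hsub x xs; split; [| apply Hsub].
  intros Sx. apply (dual_bounded_above_eq0 xs (xs x)); intros y.
  pose proof (HS _ _ _ _ (Hsub y _ eq_refl) Sx) as P.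
  rewrite !pairing_vsub in P; simpl in P. lra.
Qed.

End DualSpace.

Theorem mainTheorem10 (X : BanachSpace) (T : operator X) :
  monotone T ->
  (maximal_pseudomonotone T <-> (forall (x : X) (xs : dual X), T x xs <-> xs = dual0 X)).
Proof.
  intros Hmon; split.
  - intros HT.
    assert (Hzero : forall x xs, T x xs -> xs = dual0 X).
    { apply (maximal_pseudomonotone_values_eq0 HT), (monotone_cone_values_le Hmon).
      intros; apply maximal_pseudomonotone_scale; assumption. }
    intros x xs; split; [apply Hzero |].
    apply (maximal_pseudomonotone_sub HT pseudomonotone_zero_operator Hzero).
  - intros HT.
    replace T with (@zero_operator X); [apply maximal_pseudomonotone_zero_operator |].
    apply functional_extensionality; intros x; apply functional_extensionality; intros xs.
    symmetry; apply propositional_extensionality, HT.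
Qed.
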